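(* Let $(G,c)$ be a metric TSP instance with $n\ge 3$ cities and let $T^*$ be a shortest tour. Then every 2-optimal tour $T'$ satisfies $c(T') \le \sqrt{n/2}\, c(T^* )$.
   Context: A metric TSP instance with $n$ cities consists of a complete undirected graph $G$ on $n$ vertices together with $c: E(G)\to\mathbb{R}_{\ge 0}$ satisfying the triangle inequality $c(x,y)+c(y,z)\ge c(x,z)$. A tour is a cycle containing all vertices; its length is the sum of its edge lengths. Tours are regarded as oriented cycles. A tour is 2-optimal if for all pairs of edges $(a,b),(x,y)$ of the oriented tour, $c(a,x)+c(b,y)\ge c(a,b)+c(x,y)$. *)

From HB Require Import structures.
From mathcomp Require Import all_boot all_order all_algebra all_fingroup.
Set Implicit Arguments. Unset Strict Implicit. Unset Printing Implicit Defensive.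
Import Order.TTheory GRing.Theory Num.Theory.
Local Open Scope ring_scope.

(* Cities are 'I_n.  A cost function is c : 'I_n -> 'I_n -> R; only its values
   on pairs of distinct cities (edges of the complete graph) are meaningful. *)
Definition metric_cost (R : realFieldType) (n : nat) (c : 'I_n -> 'I_n -> R) : Prop :=
  (forall x y : 'I_n, x != y -> 0 <= c x y) /\
  (forall x y : 'I_n, x != y -> c x y = c y x) /\
  (forall x y z : 'I_n, x != y -> y != z -> x != z -> c x z <= c x y + c y z).

(* An oriented tour is given by a permutation s : the cities are visited in the
   order s 0, s 1, ..., s (n-1), then back to s 0.  Edge i is (s i, s (i+1 mod n)). *)
Definition tour_len (R : realFieldType) (n : nat) (c : 'I_n -> 'I_n -> R)
  (s : 'S_n) : R := \sum_(i < n) c (s i) (s (ordS i)).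

Definition two_optimal (R : realFieldType) (n : nat) (c : 'I_n -> 'I_n -> R)
  (s : 'S_n) : Prop :=
  forall i j : 'I_n, i != j ->
    c (s i) (s (ordS i)) + c (s j) (s (ordS j)) <=
    c (s i) (s j) + c (s (ordS i)) (s (ordS j)).

From HB Require Import structures.
From mathcomp Require Import all_boot all_order all_algebra all_fingroup.
From mathcomp Require Import ring lra zify.
Set Implicit Arguments. Unset Strict Implicit. Unset Printing Implicit Defensive.
Import Order.TTheory GRing.Theory Num.Theory.
Local Open Scope ring_scope.

(* Let the 2-optimal tour have edges (a_i, b_i) of lengths r_i, and let L be the length of
   any tour S.  Put a tent g_i(q) = max(r_i - d(b_i, q), 0) around each b_i.  Walking once
   around S, the trapezoidal integral of g_i is at least r_i^2, because 2 r_i <= L.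
   Conversely, 2-optimality and the triangle inequality through q give
   g_i(q) + g_j(q) <= d(a_i, a_j) whenever both tents are positive at q; as the a_i are
   distinct cities of S, the tents stack to at most L/2 at every point.  Hence
   2 \sum_i r_i^2 <= L^2, and Cauchy-Schwarz gives (\sum_i r_i)^2 <= n L^2 / 2. *)

Definition tent (R : realFieldType) (r y : R) : R := Num.max (r - y) 0.

Section Tent.
Variable R : realFieldType.
Implicit Types r y s u D L hs hu : R.

Lemma tentP r y : (r <= y /\ tent r y = 0) \/ (y <= r /\ tent r y = r - y).
Proof. by rewrite /tent maxEle subr_le0; case: lerP => h; [left | right]; split => //; lra. Qed.

Lemma tent_ge0 r y : 0 <= tent r y.
Proof. by case: (tentP r y) => -[? ->] //; lra. Qed.

Lemma tent_le r y : 0 <= r -> 0 <= y -> tent r y <= r.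
Proof. by case: (tentP r y) => -[? ->]; lra. Qed.

Lemma tent_gt0E r y : 0 < tent r y -> tent r y = r - y.
Proof. by case: (tentP r y) => -[? ->]; rewrite ?ltxx. Qed.

Lemma tent_sqr_sub_le r s u : s <= u ->
  tent r s ^+ 2 - tent r u ^+ 2 <= (u - s) * (tent r s + tent r u).
Proof. by case: (tentP r s) => -[? ->]; case: (tentP r u) => -[? ->]; nra. Qed.

(* Since 2 r <= L, at most one of the two tents is positive. *)
Lemma tent_add_reflect_le r L y D : 0 <= r -> 2 * r <= L -> D <= y -> D <= L - y ->
  tent r y + tent r (L - y) <= tent r D.
Proof.
by case: (tentP r y) => -[? ->]; case: (tentP r (L - y)) => -[? ->];
  case: (tentP r D) => -[? ->]; lra.
Qed.

Lemma tent_sqr_diff_le r L s u hs hu : s <= u ->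
  tent r s + tent r (L - s) <= hs -> tent r u + tent r (L - u) <= hu ->
  (tent r s ^+ 2 - tent r (L - s) ^+ 2) - (tent r u ^+ 2 - tent r (L - u) ^+ 2)
    <= (u - s) * (hs + hu).
Proof.
move=> su hs_ge hu_ge.
have := tent_sqr_sub_le r su.
have /(tent_sqr_sub_le r) : L - u <= L - s by lra.
have -> : L - s - (L - u) = u - s by ring.
have : (u - s) * (tent r s + tent r (L - s) + (tent r u + tent r (L - u)))
       <= (u - s) * (hs + hu) by apply: ler_wpM2l; lra.
rewrite !mulrDr; lra.
Qed.

End Tent.

Lemma sum_periodic_shift (V : zmodType) (G : nat -> V) N :
  (forall k, G (k + N)%N = G k) ->
  forall m, \sum_(k < N) G k = \sum_(k < N) G (m + k)%N.
Proof.
move=> G_periodic; elim=> [|m IH]; first by apply: eq_bigr => k _; rewrite add0n.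
rewrite IH; apply: (@addrI _ (G m)).
have -> : G m + \sum_(k < N) G (m.+1 + k)%N = \sum_(k < N.+1) G (m + k)%N.
  by rewrite big_ord_recl addn0; congr (_ + _); apply: eq_bigr => k _; rewrite addSnnS.
by rewrite big_ord_recr /= G_periodic addrC.
Qed.

Definition walk_len (R : realFieldType) (T : Type) (d : T -> T -> R) (w : nat -> T)
  (k : nat) : R := \sum_(i < k) d (w i) (w i.+1).

Section Pseudometric.
Variables (R : realFieldType) (T : Type) (d : T -> T -> R).
Hypotheses (d_refl : forall x, d x x = 0) (d_sym : forall x y, d x y = d y x)
  (d_tri : forall x y z, d x z <= d x y + d y z).

Lemma dist_ge0 x y : 0 <= d x y.
Proof. by have := d_tri x y x; rewrite d_refl (d_sym y x); lra. Qed.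

Section Walk.
Variable w : nat -> T.
Local Notation len := (walk_len d w).

Lemma walk_lenS k : len k.+1 = len k + d (w k) (w k.+1).
Proof. by rewrite /walk_len big_ord_recr. Qed.

Lemma walk_len_ge0 k : 0 <= len k.
Proof. by apply: sumr_ge0 => i _; apply: dist_ge0. Qed.

Lemma dist_le_walk_len j k : (j <= k)%N -> d (w j) (w k) <= len k - len j.
Proof.
move=> /subnKC <-; elim: (k - j)%N => [|m IH]; first by rewrite addn0 d_refl subrr.
by rewrite addnS walk_lenS; have := d_tri (w j) (w (j + m)) (w (j + m).+1); lra.
Qed.

Variable N : nat.
Hypothesis w_periodic : forall k, w (k + N)%N = w k.

Lemma walk_lenDperiod k : len (k + N) = len k + len N.
Proof.
elim: k => [|k IH]; first by rewrite add0n /walk_len big_ord0 add0r.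
by rewrite addSn !walk_lenS IH -addSn !w_periodic; lra.
Qed.

Lemma dist_le_walk_len_back j k : (j <= k)%N -> (k <= j + N)%N ->
  d (w j) (w k) <= len N - (len k - len j).
Proof.
move=> _ /dist_le_walk_len; rewrite w_periodic walk_lenDperiod d_sym; lra.
Qed.

Lemma double_dist_le_walk_len j k : (j <= k)%N -> (k <= j + N)%N ->
  2 * d (w j) (w k) <= len N.
Proof.
move=> jk kjN; have := dist_le_walk_len jk; have := dist_le_walk_len_back jk kjN; lra.
Qed.

(* With t the arc length from w m, psi t := tent(t)^2 - tent(L - t)^2 drops from
   r^2 to -r^2 along the walk, and each step is bounded by the trapezoidal term. *)
Lemma tent_walk_sum_ge m r : 0 <= r -> 2 * r <= len N ->
  2 * r ^+ 2 <= \sum_(k < N) d (w k) (w k.+1) *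
                  (tent r (d (w m) (w k)) + tent r (d (w m) (w k.+1))).
Proof.
move=> r_ge0 r_half; set L := len N in r_half *.
pose G k := d (w k) (w k.+1) * (tent r (d (w m) (w k)) + tent r (d (w m) (w k.+1))).
rewrite (@sum_periodic_shift _ G N _ m) => [|k]; last by rewrite /G -addSn !w_periodic.
pose tau t := len (m + t) - len m.
pose psi y := tent r y ^+ 2 - tent r (L - y) ^+ 2.
have tent_bound t : (t <= N)%N ->
    tent r (tau t) + tent r (L - tau t) <= tent r (d (w m) (w (m + t)%N)).
  move=> tN; apply: tent_add_reflect_le => //; first exact: dist_le_walk_len (leq_addr _ _).
  by apply: dist_le_walk_len_back; rewrite ?leq_addr ?leq_add2l.
have step (t : 'I_N) : psi (tau t) - psi (tau t.+1) <= G (m + t)%N.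
  have dtau : tau t.+1 - tau t = d (w (m + t)%N) (w (m + t).+1).
    by rewrite /tau addnS walk_lenS; ring.
  rewrite /G -dtau -addnS; apply: tent_sqr_diff_le.
  - by have := dist_ge0 (w (m + t)%N) (w (m + t).+1); lra.
  - exact/tent_bound/ltnW.
  - exact: tent_bound.
have tau0 : tau 0%N = 0 by rewrite /tau addn0 subrr.
have tauN : tau N = L by rewrite /tau walk_lenDperiod /L; ring.
have tent0 : tent r 0 = r by case: (tentP r 0) => -[? ->]; lra.
have tentL : tent r L = 0 by case: (tentP r L) => -[? ->]; lra.
have telescope : \sum_(t < N) (psi (tau t) - psi (tau t.+1)) = 2 * r ^+ 2.
  rewrite -(big_mkord xpredT (fun t => psi (tau t) - psi (tau t.+1))).
  rewrite (@telescope_sumr_eq _ 0 N (fun t => - psi (tau t))) // => [|t _].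
    by rewrite tau0 tauN /psi subrr subr0 tent0 tentL; ring.
  by rewrite opprK addrC.
by rewrite -telescope; apply: ler_sum => t _; apply: step.
Qed.

Section Packing.
Variable s : nat -> R.
Hypothesis s_ge0 : forall j, 0 <= s j.
Hypothesis s_pair : forall j k, (j < k < N)%N -> 0 < s j -> 0 < s k ->
  s j + s k <= d (w j) (w k).
Hypothesis s_half : forall j, (j < N)%N -> 2 * s j <= len N.

Lemma packing_chain j S : path ltn j S ->
  {in j :: S, forall i, (i < N)%N && (0 < s i)} ->
  2 * \sum_(i <- j :: S) s i <= len (last j S) - len j + s j + s (last j S).
Proof.
elim: S j => [|k S IH] j /=; first by rewrite big_seq1; lra.
move=> /andP[jk k_path] inS.
have /andP[_ sj] := inS j (mem_head _ _).
have inS' : {in k :: S, forall i, (i < N)%N && (0 < s i)}.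
  by move=> i iS; apply: inS; rewrite inE iS orbT.
have /andP[kN sk] := inS' k (mem_head _ _).
have := IH k k_path inS'.
have := s_pair (introT andP (conj jk kN)) sj sk.
have := dist_le_walk_len (ltnW jk).
by rewrite big_cons; lra.
Qed.

(* Consecutive positive weights, and the last and the first one across the closing arc,
   are separated along the walk by at least their sum. *)
Lemma packing_sum_le : 2 * \sum_(j < N) s j <= len N.
Proof.
rewrite -(big_mkord xpredT s) (bigID (fun j => 0 < s j)) /=.
rewrite [X in _ + X]big1 => [|j]; last by move=> sj; apply/eqP; rewrite eq_le s_ge0 andbT leNgt.
rewrite addr0 -big_filter.
have : sorted ltn [seq j <- index_iota 0 N | 0 < s j].
  by apply: sorted_filter; [exact: ltn_trans | exact: iota_ltn_sorted].
have : {subset [seq j <- index_iota 0 N | 0 < s j] <= [pred i | (i < N)%N && (0 < s i)]}.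
  by move=> i; rewrite mem_filter mem_index_iota andbC.
case: [seq _ <- _ | _] => [|j S] inS S_path.
  by rewrite big_nil; have := walk_len_ge0 N; lra.
apply: le_trans (packing_chain S_path inS) _.
have /andP[jN sj] := inS j (mem_head _ _).
case: S S_path inS => [_ _ | k S]; first by have := s_half jN; rewrite /=; lra.
move=> S_path inS.
have j_lt : (j < last k S)%N.
  by have /allP := order_path_min ltn_trans S_path; apply; exact: mem_last.
have /andP[lN sl] : (last k S < N)%N && (0 < s (last k S)).
  by apply: inS; rewrite inE mem_last orbT.
have := s_pair (introT andP (conj j_lt lN)) sj sl.
have := dist_le_walk_len_back (ltnW j_lt) (leq_trans (ltnW lN) (leq_addl _ _)).
lra.
Qed.

End Packing.

End Walk.
End Pseudometric.

Lemma ordS_neq n (i : 'I_n) : (1 < n)%N -> ordS i != i.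
Proof.
move=> n_gt1; apply/eqP => /(congr1 val) /=.
have := ltn_ord i; rewrite leq_eqVlt => /orP[/eqP i_last | /modn_small ->]; last by lia.
by rewrite i_last modnn; lia.
Qed.

Definition tour_walk n (s : 'S_n.+1) (k : nat) : 'I_n.+1 := s (inord (k %% n.+1)).

Section TourWalk.
Variables (n : nat) (s : 'S_n.+1).

Lemma tour_walkDn k : tour_walk s (k + n.+1) = tour_walk s k.
Proof. by rewrite /tour_walk modnDr. Qed.

Lemma tour_walk_ord (i : 'I_n.+1) : tour_walk s i = s i.
Proof. by rewrite /tour_walk modn_small // inord_val. Qed.

Lemma tour_walk_ordS (i : 'I_n.+1) : tour_walk s i.+1 = s (ordS i).
Proof. by rewrite /tour_walk; congr (s _); apply: val_inj; rewrite /= inordK // ltn_pmod. Qed.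

Lemma tour_walkK u : tour_walk s ((s^-1)%g u) = u.
Proof. by rewrite tour_walk_ord permKV. Qed.

Lemma tour_walk_inj j k : (j < n.+1)%N -> (k < n.+1)%N ->
  tour_walk s j = tour_walk s k -> j = k.
Proof.
move=> jn kn /perm_inj /(congr1 val) /=.
by rewrite !inordK ?ltn_pmod // !modn_small.
Qed.

Lemma walk_len_tour_walk (R : realFieldType) (d : 'I_n.+1 -> 'I_n.+1 -> R) :
  walk_len d (tour_walk s) n.+1 = \sum_i d (s i) (s (ordS i)).
Proof. by apply: eq_bigr => i _; rewrite tour_walk_ord tour_walk_ordS. Qed.

End TourWalk.

Section TwoOptimal.
Variables (R : realFieldType) (n : nat) (d : 'I_n.+1 -> 'I_n.+1 -> R).
Hypotheses (d_refl : forall x, d x x = 0) (d_sym : forall x y, d x y = d y x)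
  (d_tri : forall x y z, d x z <= d x y + d y z).
Variables (S T : 'S_n.+1).
Local Notation w := (tour_walk S).
Local Notation L := (walk_len d w n.+1).
Local Notation r i := (d (T i) (T (ordS i))).
Hypothesis T_two_opt : forall i j : 'I_n.+1, i != j ->
  r i + r j <= d (T i) (T j) + d (T (ordS i)) (T (ordS j)).

Lemma double_dist_le_tour u v : 2 * d u v <= L.
Proof.
rewrite -(tour_walkK S u) -(tour_walkK S v).
have := ltn_ord ((S^-1)%g u); have := ltn_ord ((S^-1)%g v).
move: (val ((S^-1)%g u)) (val ((S^-1)%g v)) => j k kn jn.
wlog jk : j k jn kn / (j <= k)%N => [hw|].
  by case: (leqP j k) => [|/ltnW] jk; [|rewrite d_sym]; apply: hw.
apply: double_dist_le_walk_len => //; first exact: tour_walkDn.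
exact: leq_trans (ltnW kn) (leq_addl _ _).
Qed.

Lemma sum_tent_le q : 2 * \sum_i tent (r i) (d (T (ordS i)) q) <= L.
Proof.
pose s j := tent (r ((T^-1)%g (w j))) (d (T (ordS ((T^-1)%g (w j)))) q).
rewrite (reindex_inj (h := fun j => (T^-1)%g (S j))) /=; last first.
  by move=> x y /perm_inj /perm_inj.
under eq_bigr => i _ do rewrite -(tour_walk_ord S i).
apply: (packing_sum_le (s := s) d_refl d_sym d_tri (tour_walkDn S)).
- by move=> j; apply: tent_ge0.
- move=> j k /andP[jk kn] /tent_gt0E sj /tent_gt0E sk; rewrite /s sj sk.
  have wjk : w j != w k.
    by apply/eqP => /(tour_walk_inj (ltn_trans jk kn) kn) jk_eq; rewrite jk_eq ltnn in jk.
  rewrite -[in d (w j) _](permKV T (w j)) -[in d _ (w k)](permKV T (w k)).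
  set i := (T^-1)%g (w j); set i' := (T^-1)%g (w k).
  have /T_two_opt two_opt : i != i' by rewrite (inj_eq perm_inj).
  have := d_tri (T (ordS i)) q (T (ordS i')); rewrite (d_sym q); lra.
- move=> j _; rewrite /s; set i := (T^-1)%g (w j).
  have := double_dist_le_tour (T i) (T (ordS i)).
  have := tent_le (dist_ge0 d_refl d_sym d_tri (T i) (T (ordS i)))
                  (dist_ge0 d_refl d_sym d_tri (T (ordS i)) q).
  lra.
Qed.

Lemma two_opt_sum_sqr_le : 2 * \sum_i r i ^+ 2 <= L ^+ 2.
Proof.
have tent_sum i : 2 * r i ^+ 2 <= \sum_(k < n.+1) d (w k) (w k.+1) *
    (tent (r i) (d (T (ordS i)) (w k)) + tent (r i) (d (T (ordS i)) (w k.+1))).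
  have := tent_walk_sum_ge d_refl d_sym d_tri (tour_walkDn S)
    (val ((S^-1)%g (T (ordS i)))) (dist_ge0 d_refl d_sym d_tri _ _)
    (double_dist_le_tour (T i) (T (ordS i))).
  by rewrite tour_walkK.
rewrite mulr_sumr; apply: le_trans (ler_sum _ (fun i _ => tent_sum i)) _.
rewrite exchange_big expr2 [X in X * _]/walk_len mulr_suml /=.
apply: ler_sum => k _; rewrite -mulr_sumr big_split /=.
apply: ler_wpM2l; first exact: dist_ge0.
by have := sum_tent_le (w k); have := sum_tent_le (w k.+1); lra.
Qed.

End TwoOptimal.

(* The costs c x x are junk; zeroing them turns a metric cost into a pseudometric. *)
Definition cost_dist (R : realFieldType) n (c : 'I_n -> 'I_n -> R) (x y : 'I_n) : R :=
  if x == y then 0 else c x y.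

Section CostDist.
Variables (R : realFieldType) (n : nat) (c : 'I_n -> 'I_n -> R).

Lemma cost_dist_refl x : cost_dist c x x = 0.
Proof. by rewrite /cost_dist eqxx. Qed.

Lemma cost_distE x y : x != y -> cost_dist c x y = c x y.
Proof. by rewrite /cost_dist => /negbTE ->. Qed.

Lemma tour_len_cost_dist (s : 'S_n) : (1 < n)%N ->
  tour_len c s = \sum_i cost_dist c (s i) (s (ordS i)).
Proof.
move=> n_gt1; apply: eq_bigr => i _.
by rewrite cost_distE // (inj_eq perm_inj) eq_sym ordS_neq.
Qed.

Lemma two_optimal_cost_dist (s : 'S_n) : (1 < n)%N -> two_optimal c s ->
  forall i j : 'I_n, i != j ->
    cost_dist c (s i) (s (ordS i)) + cost_dist c (s j) (s (ordS j)) <=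
    cost_dist c (s i) (s j) + cost_dist c (s (ordS i)) (s (ordS j)).
Proof.
move=> n_gt1 s_opt i j ij.
by rewrite !cost_distE ?s_opt ?(inj_eq perm_inj) ?(inj_eq (@ordS_inj _)) // eq_sym ordS_neq.
Qed.

Hypothesis c_metric : metric_cost c.

Lemma cost_dist_sym x y : cost_dist c x y = cost_dist c y x.
Proof.
rewrite /cost_dist eq_sym; case: eqVneq => // xy.
by case: c_metric => _ [c_sym _]; rewrite c_sym // eq_sym.
Qed.

Lemma cost_dist_tri x y z : cost_dist c x z <= cost_dist c x y + cost_dist c y z.
Proof.
case: c_metric => c_ge0 [_ c_tri].
have dist_ge0 u v : 0 <= cost_dist c u v.
  by rewrite /cost_dist; case: eqVneq => // /c_ge0.
case: (eqVneq x z) => [<-|xz]; first by rewrite cost_dist_refl addr_ge0.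
case: (eqVneq x y) => [<-|xy]; first by rewrite cost_dist_refl add0r.
case: (eqVneq y z) => [<-|yz]; first by rewrite cost_dist_refl addr0.
by rewrite !cost_distE //; apply: c_tri.
Qed.

End CostDist.

Lemma sqr_sum_le (R : realFieldType) N (x : 'I_N -> R) :
  (\sum_i x i) ^+ 2 <= N%:R * \sum_i x i ^+ 2.
Proof.
have expand i : \sum_j (x i - x j) ^+ 2 =
    N%:R * x i ^+ 2 + \sum_j x j ^+ 2 - 2 * x i * \sum_j x j.
  rewrite (eq_bigr (fun j => x i ^+ 2 + (x j ^+ 2 - 2 * x i * x j))) => [|j _]; last by ring.
  by rewrite big_split /= sumr_const card_ord sumrB -mulr_sumr mulr_natl; ring.
have : 0 <= \sum_i \sum_j (x i - x j) ^+ 2.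
  by apply: sumr_ge0 => i _; apply: sumr_ge0 => j _; apply: sqr_ge0.
rewrite (eq_bigr _ (fun i _ => expand i)) sumrB big_split /= -mulr_sumr sumr_const card_ord.
by rewrite -mulr_suml -mulr_natr -mulr_sumr expr2; nra.
Qed.

Lemma ler_sqrt_mul (R : rcfType) (a x y : R) : 0 <= a -> 0 <= y ->
  x ^+ 2 <= a * y ^+ 2 -> x <= Num.sqrt a * y.
Proof.
move=> a_ge0 y_ge0 /ler_wsqrtr; rewrite sqrtrM // !sqrtr_sqr (ger0_norm y_ge0).
exact: le_trans (ler_norm x).
Qed.

Unset Implicit Arguments.

Theorem mainTheorem3 (R : rcfType) (n : nat) (c : 'I_n -> 'I_n -> R)
  (Tstar T' : 'S_n) :
  (3 <= n)%N ->
  metric_cost c ->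
  (forall T : 'S_n, tour_len c Tstar <= tour_len c T) ->
  two_optimal c T' ->
  tour_len c T' <= Num.sqrt (n%:R / 2) * tour_len c Tstar.
Proof.
case: n c Tstar T' => [|n] // c Tstar T' n_ge3 c_metric _ T'_opt.
have n_gt1 : (1 < n.+1)%N by apply: leq_trans n_ge3.
have d_refl := cost_dist_refl c; have d_sym := cost_dist_sym c_metric.
have d_tri := cost_dist_tri c_metric.
have := two_opt_sum_sqr_le d_refl d_sym d_tri Tstar (two_optimal_cost_dist n_gt1 T'_opt).
have := sqr_sum_le (fun i => cost_dist c (T' i) (T' (ordS i))).
have := walk_len_ge0 d_refl d_sym d_tri (tour_walk Tstar) n.+1.
rewrite !walk_len_tour_walk (tour_len_cost_dist c T' n_gt1) (tour_len_cost_dist c Tstar n_gt1).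
set L := \sum_i _; set X := \sum_i _; set Q := \sum_i _ => L_ge0 CS key.
apply: ler_sqrt_mul => //; first exact: divr_ge0.
have : n.+1%:R * (2 * Q) <= n.+1%:R * L ^+ 2 by apply: ler_wpM2l.
lra.
Qed.
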